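(* Let $m$ range over even integers tending to infinity, with $N=N(m)$, $n=n(m)$ positive integers satisfying $N=o(m)$ and $n=o(m)$, and fix $0<\varepsilon\le1$. Let $\bar J_2=5$. Then, uniformly over all $\omega\in K_m$ and all $x,y\in[m]^N$, $$\log\frac{\Pr_{(u,q^\omega,u)}\big(\{X=x,Y=y\}\cap B\big)}{\Pr_{(u,q^\omega,u)}\{X=x,Y=y\}}\ \ge\ -\bar J_2\,\frac{Nn+n^2}{m}\,(1+o(1)),$$ $$\log\frac{\Pr_{(u,q^\omega,q^\omega)}\big(\{X=x,Y=y\}\cap B\big)}{\Pr_{(u,q^\omega,q^\omega)}\{X=x,Y=y\}}\ \ge\ -\bar J_2\,\frac{Nn+n^2}{m}\,(1+o(1)),$$ where $B$ is the event that no symbol appears more than once in $Z$ and no symbol of $Z$ appears in $X$ or in $Y$.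
   Context: Let $u$ be the uniform distribution on $[m]=\{1,\dots,m\}$. Let $K_m$ be the collection of all subsets of $[m]$ of cardinality $m/2$. For $\omega\in K_m$ let $q^\omega$ be the distribution on $[m]$ with $q^\omega_j=(1+\varepsilon)/m$ for $j\in\omega$ and $q^\omega_j=(1-\varepsilon)/m$ for $j\notin\omega$. For distributions $a,b,c$ on $[m]$, $\Pr_{(a,b,c)}$ denotes the probability when $X=(X_1,\dots,X_N)$ is i.i.d. with marginal $a$, $Y=(Y_1,\dots,Y_N)$ is i.i.d. with marginal $b$, $Z=(Z_1,\dots,Z_n)$ is i.i.d. with marginal $c$, and $X,Y,Z$ are independent. *)

From HB Require Import structures.
From mathcomp Require Import all_boot all_order all_algebra.
From mathcomp Require Import all_classical all_reals all_analysis.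
Set Implicit Arguments. Unset Strict Implicit. Unset Printing Implicit Defensive.
Import Order.TTheory GRing.Theory Num.Theory.
Local Open Scope ring_scope.

(* Symbols [m] = {1..m} are represented by 'I_m = {0..m-1}. *)

Definition unif {R : realType} (m : nat) : 'I_m -> R := fun _ => 1 / m%:R.

Definition qom {R : realType} (m : nat) (eps : R) (om : {set 'I_m}) : 'I_m -> R :=
  fun j => if j \in om then (1 + eps) / m%:R else (1 - eps) / m%:R.

Definition wprob {R : realType} {m k : nat} (a : 'I_m -> R) (w : {ffun 'I_k -> 'I_m}) : R :=
  \prod_(i < k) a (w i).

(* Pr_{(a,b,c)}(E): X ~ a^N, Y ~ b^N, Z ~ c^n, independent *)
Definition Pr3 {R : realType} (m N n : nat) (a b c : 'I_m -> R)
  (E : {ffun 'I_N -> 'I_m} -> {ffun 'I_N -> 'I_m} -> {ffun 'I_n -> 'I_m} -> bool) : R :=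
  \sum_(x : {ffun 'I_N -> 'I_m}) \sum_(y : {ffun 'I_N -> 'I_m}) \sum_(z : {ffun 'I_n -> 'I_m})
    (if E x y z then wprob a x * wprob b y * wprob c z else 0).

Definition eventB {m N n : nat} (x y : {ffun 'I_N -> 'I_m}) (z : {ffun 'I_n -> 'I_m}) : bool :=
  injectiveb z && [forall i, (z i \notin codom x) && (z i \notin codom y)].

Definition evXY {m N n : nat} (x y : {ffun 'I_N -> 'I_m})
  (x' y' : {ffun 'I_N -> 'I_m}) (z : {ffun 'I_n -> 'I_m}) : bool :=
  (x' == x) && (y' == y).

Definition evXYB {m N n : nat} (x y : {ffun 'I_N -> 'I_m})
  (x' y' : {ffun 'I_N -> 'I_m}) (z : {ffun 'I_n -> 'I_m}) : bool :=
  evXY x y x' y' z && eventB x' y' z.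

Definition Jbar2 {R : realType} : R := 5.

From HB Require Import structures.
From mathcomp Require Import all_boot all_order all_algebra.
From mathcomp Require Import all_classical all_reals all_analysis.
From mathcomp Require Import ring lra.
Import Order.TTheory GRing.Theory Num.Theory.
Set Implicit Arguments. Unset Strict Implicit. Unset Printing Implicit Defensive.
Local Open Scope ring_scope.

(* Given X = x and Y = y, the event B is the event that Z is an injective word
   avoiding the at most 2N symbols S occurring in x or y, so the conditional
   probability is the c^n-mass of such words.  Every marginal c puts mass at
   most d = 2/m on each symbol, so when the first i letters are fixed the next
   one still has at least 1 - (2N + i) d of admissible mass; this gives the
   lower bound (1 - t)^n with t = (2N + n) d.  For t <= 1/5 we have
   ln (1 - t) >= -5t/4, hence the log-ratio is at least
   -(5/2) n (2N + n)/m >= -5 (Nn + n^2)/m. *)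

Section FiniteFunctionCons.
Variable T : finType.

Definition fcons {k} (j : T) (z : {ffun 'I_k -> T}) : {ffun 'I_k.+1 -> T} :=
  [ffun i => if unlift ord0 i is Some i' then z i' else j].

Lemma fcons0 k j (z : {ffun 'I_k -> T}) : fcons j z ord0 = j.
Proof. by rewrite ffunE unlift_none. Qed.

Lemma fconsS k j (z : {ffun 'I_k -> T}) i : fcons j z (lift ord0 i) = z i.
Proof. by rewrite ffunE liftK. Qed.

Lemma codom_fcons k j (z : {ffun 'I_k -> T}) : codom (fcons j z) = j :: codom z.
Proof.
rewrite !codomE enum_ordSl /= fcons0 -map_comp; congr (_ :: _).
by apply: eq_map => i; rewrite /= fconsS.
Qed.

Lemma injectiveb_fcons k j (z : {ffun 'I_k -> T}) :
  injectiveb (fcons j z) = (j \notin codom z) && injectiveb z.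
Proof. by rewrite /injectiveb /dinjectiveb -!codomE codom_fcons. Qed.

Lemma forall_fcons k j (z : {ffun 'I_k -> T}) (P : pred T) :
  [forall i, P (fcons j z i)] = P j && [forall i, P (z i)].
Proof.
apply/forallP/andP => [h | [Pj /forallP Pz] i].
  by split; [rewrite -(fcons0 j z) | apply/forallP => i; rewrite -(fconsS j z)].
by case: (unliftP ord0 i) => [i' ->|->]; rewrite ?fconsS ?fcons0.
Qed.

Lemma big_ffunS (V : nmodType) k (F : {ffun 'I_k.+1 -> T} -> V) :
  \sum_z F z = \sum_(j : T) \sum_(z : {ffun 'I_k -> T}) F (fcons j z).
Proof.
rewrite pair_bigA /= (reindex (fun p : T * {ffun 'I_k -> T} => fcons p.1 p.2)) //.
exists (fun z : {ffun 'I_k.+1 -> T} => (z ord0, [ffun i => z (lift ord0 i)])).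
  move=> [j z] _ /=; rewrite fcons0; congr pair.
  by apply/ffunP => i; rewrite ffunE fconsS.
move=> z _; apply/ffunP => i; rewrite ffunE.
by case: unliftP => [i'|] ->; rewrite ?ffunE.
Qed.

End FiniteFunctionCons.

Section AvoidMass.
Variables (R : realType) (T : finType) (c : T -> R).
Hypothesis c_ge0 : forall j, 0 <= c j.
Implicit Types S : {set T}.

Definition avoid_mass k (S : {set T}) : R :=
  \sum_(z : {ffun 'I_k -> T} | injectiveb z && [forall i, z i \notin S])
    \prod_(i < k) c (z i).

Lemma avoid_mass0 S : avoid_mass 0 S = 1.
Proof.
rewrite /avoid_mass (eq_bigl xpredT) => [|z].
  rewrite (eq_bigr (fun=> 1)) => [|z _]; last by rewrite big_ord0.
  by rewrite sumr_const card_ffun !card_ord.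
by apply/andP; split; [apply/injectiveP => -[] | apply/forallP => -[]].
Qed.

Lemma fcons_avoidE k j (z : {ffun 'I_k -> T}) S :
  injectiveb (fcons j z) && [forall i, fcons j z i \notin S] =
  (j \notin S) && (injectiveb z && [forall i, z i \notin j |: S]).
Proof.
rewrite injectiveb_fcons (forall_fcons j z (fun t => t \notin S)).
have -> : [forall i, z i \notin j |: S] = (j \notin codom z) && [forall i, z i \notin S].
  apply/forallP/andP => [h | [jz /forallP Sz] i].
    split; last by apply/forallP => i; have := h i; rewrite !inE negb_or => /andP[].
    by apply/codomP => -[i ji]; have := h i; rewrite -ji !inE eqxx.
  rewrite !inE negb_or Sz andbT; apply: contra jz => /eqP <-; exact: codom_f.
by case: (j \in S); case: (j \in codom z); case: injectiveb.
Qed.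

Lemma avoid_massS k S :
  avoid_mass k.+1 S = \sum_(j in ~: S) c j * avoid_mass k (j |: S).
Proof.
rewrite /avoid_mass big_mkcond big_ffunS [RHS]big_mkcond /=.
apply: eq_big => // j _; rewrite inE.
case: (boolP (j \in S)) => [jS | jS] /=.
  by rewrite big1 // => z _; rewrite fcons_avoidE jS.
rewrite mulr_sumr [RHS]big_mkcond; apply: eq_bigr => z _; rewrite fcons_avoidE jS /=.
case: ifP; rewrite ?mulr0 // big_ord_recl fcons0 => _.
by congr (_ * _); apply: eq_bigr => i _; rewrite fconsS.
Qed.

Lemma sum_setC_setU1 j S : j \notin S ->
  \sum_(i in ~: (j |: S)) c i = \sum_(i in ~: S) c i - c j.
Proof.
move=> jS; rewrite [X in _ = X - _](bigD1 j) ?inE //= addrC addrK.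
by apply: eq_bigl => i; rewrite !inE negb_or andbC.
Qed.

Lemma sum_setC_ge (d : R) S : \sum_j c j = 1 -> (forall j, c j <= d) ->
  1 - #|S|%:R * d <= \sum_(j in ~: S) c j.
Proof.
move=> c1 cd.
have splitS : \sum_j c j = \sum_(j in S) c j + \sum_(j in ~: S) c j.
  by rewrite (bigID (mem S)) /=; congr (_ + _); apply: eq_bigl => j; rewrite inE.
have massS : \sum_(j in S) c j <= #|S|%:R * d.
  by rewrite mulr_natl -sumr_const; apply: ler_sum.
lra.
Qed.

Lemma avoid_mass_ge (d : R) k S s : 0 <= d -> (forall j, c j <= d) ->
  k%:R * d <= s -> s <= \sum_(j in ~: S) c j -> (s - k%:R * d) ^+ k <= avoid_mass k S.
Proof.
move=> d0 cd; elim: k S s => [|k IH] S s hks hsS; first by rewrite expr0 avoid_mass0.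
set u := s - k.+1%:R * d.
have kd0 : 0 <= k.+1%:R * d by apply: mulr_ge0.
have IHj : forall j, j \in ~: S -> u ^+ k <= avoid_mass k (j |: S).
  move=> j; rewrite inE => jS.
  have -> : u = s - d - k%:R * d by rewrite /u -nat1r mulrDl mul1r opprD addrA.
  apply: IH; first by move: hks; rewrite -nat1r mulrDl mul1r; lra.
  by rewrite sum_setC_setU1 //; have := cd j; lra.
rewrite avoid_massS exprS.
apply: le_trans (_ : (\sum_(j in ~: S) c j) * u ^+ k <= _).
  by apply: ler_wpM2r; [apply: exprn_ge0; rewrite subr_ge0 | rewrite /u; lra].
by rewrite mulr_suml; apply: ler_sum => j jS; apply: ler_wpM2l => //; apply: IHj.
Qed.

End AvoidMass.

Section Marginals.
Variables (R : realType) (m : nat).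
Hypothesis m_gt0 : (0 < m)%N.

Lemma sum_unif : \sum_j @unif R m j = 1.
Proof.
rewrite /unif sumr_const card_ord -[_ *+ m]mulr_natr div1r mulVf //.
by rewrite pnatr_eq0 -lt0n.
Qed.

Lemma unif_bounds j : 0 <= @unif R m j <= 2 / m%:R.
Proof. by rewrite /unif divr_ge0 ?ler_pM2r ?invr_gt0 ?ltr0n // ler1n. Qed.

Variables (eps : R) (om : {set 'I_m}).
Hypothesis eps_bound : -1 <= eps <= 1.

Lemma qom_bounds j : 0 <= qom eps om j <= 2 / m%:R.
Proof.
have m0 : 0 < (m%:R : R)^-1 by rewrite invr_gt0 ltr0n.
case/andP: eps_bound => e1 e2.
rewrite /qom; case: ifP => _; apply/andP; split.
- by apply: divr_ge0; [lra | exact: ler0n].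
- by rewrite ler_pM2r //; lra.
- by apply: divr_ge0; [lra | exact: ler0n].
- by rewrite ler_pM2r //; lra.
Qed.

Lemma sum_qom : ~~ odd m -> #|om| = m./2 -> \sum_j qom eps om j = 1.
Proof.
move=> m_even om_half.
rewrite /qom (bigID (mem om)) /=.
rewrite (eq_bigr (fun=> (1 + eps) / m%:R)) => [|j ->] //.
rewrite [X in _ + X](eq_bigr (fun=> (1 - eps) / m%:R)) => [|j /negbTE ->] //.
rewrite !sumr_const.
have m_halves : m = (m./2 + m./2)%N.
  by rewrite addnn -[LHS]odd_double_half (negbTE m_even).
have -> : #|[pred i | i \notin om]| = m./2.
  have := cardsC om; rewrite card_ord om_half => hm.
  rewrite (eq_card (B := ~: om)) => [|i]; last by rewrite !inE.
  by apply/eqP; rewrite -(eqn_add2l m./2) hm -m_halves.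
have m_half : m%:R = 2 * m./2%:R :> R by rewrite [in LHS]m_halves natrD; ring.
rewrite om_half -mulrnDl -mulrDl (_ : 1 + eps + (1 - eps) = 2); last by lra.
by rewrite -[_ *+ _]mulr_natr -mulrA mulrCA -m_half mulVf // pnatr_eq0 -lt0n.
Qed.

End Marginals.

Lemma sum_wprob (R : realType) m n (c : 'I_m -> R) :
  \sum_(z : {ffun 'I_n -> 'I_m}) wprob c z = (\sum_j c j) ^+ n.
Proof.
rewrite /wprob -(bigA_distr_bigA (fun (i : 'I_n) (j : 'I_m) => c j)) /=.
by rewrite prodr_const card_ord.
Qed.

Section ConditioningOnXY.
Variables (R : realType) (m N n : nat) (a b c : 'I_m -> R) (x y : {ffun 'I_N -> 'I_m}).

Lemma Pr3_supported
    (E : {ffun 'I_N -> 'I_m} -> {ffun 'I_N -> 'I_m} -> {ffun 'I_n -> 'I_m} -> bool) :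
  (forall x' y' z, E x' y' z -> (x' == x) && (y' == y)) ->
  Pr3 a b c E = wprob a x * wprob b y * \sum_z (if E x y z then wprob c z else 0).
Proof.
move=> suppE; rewrite /Pr3 (bigD1 x) //= [X in _ + X]big1 ?addr0 => [|x' /negbTE x'x].
  rewrite (bigD1 y) //= [X in _ + X]big1 ?addr0 => [|y' /negbTE y'y].
    by rewrite mulr_sumr; apply: eq_bigr => z _; case: ifP; rewrite ?mulr0.
  by apply: big1 => z _; case: ifP => // /suppE; rewrite y'y andbF.
by apply: big1 => y' _; apply: big1 => z _; case: ifP => // /suppE; rewrite x'x.
Qed.

Lemma Pr3_evXY : Pr3 a b c (@evXY _ _ n x y) = wprob a x * wprob b y * (\sum_j c j) ^+ n.
Proof.
rewrite Pr3_supported -?sum_wprob => [|x' y' z //].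
by congr (_ * _); apply: eq_bigr => z _; rewrite /evXY !eqxx.
Qed.

Lemma Pr3_evXYB : Pr3 a b c (@evXYB _ _ n x y) =
  wprob a x * wprob b y * avoid_mass c n ([set j in codom x] :|: [set j in codom y]).
Proof.
rewrite Pr3_supported /avoid_mass ?[in RHS]big_mkcond => [|x' y' z /andP[] //].
congr (_ * _); apply: eq_bigr => z _; rewrite /evXYB /evXY !eqxx /eventB /=.
by congr (if _ && _ then _ else _); apply: eq_forallb => i; rewrite !inE negb_or.
Qed.

Lemma card_codomU : (#|[set j in codom x] :|: [set j in codom y]| <= N + N)%N.
Proof.
apply: leq_trans (leq_card_setU _ _) _; rewrite !cardsE.
by apply: leq_add; rewrite (leq_trans (card_size _)) // size_codom card_ord.
Qed.

Lemma Pr3_evXYB_ratio_ge (d : R) :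
  0 <= d -> (forall j, 0 <= c j <= d) -> \sum_j c j = 1 -> (N + N + n)%:R * d <= 1 ->
  0 < Pr3 a b c (@evXY _ _ n x y) ->
  (1 - (N + N + n)%:R * d) ^+ n <=
  Pr3 a b c (@evXYB _ _ n x y) / Pr3 a b c (@evXY _ _ n x y).
Proof.
move=> d0 c_bounds c1 load_le1; rewrite Pr3_evXYB Pr3_evXY c1 expr1n mulr1 => XY_gt0.
rewrite mulrAC divff ?mul1r ?gt_eqF //.
have [c_ge0 c_le] : (forall j, 0 <= c j) /\ (forall j, c j <= d).
  by split=> j; have /andP[] := c_bounds j.
set S := _ :|: _.
have massSC : 1 - (N + N)%:R * d <= \sum_(j in ~: S) c j.
  apply: le_trans (sum_setC_ge S c1 c_le); rewrite lerD2l lerN2 ler_wpM2r //.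
  by rewrite ler_nat card_codomU.
rewrite natrD mulrDl opprD addrA.
apply: avoid_mass_ge => //; move: load_le1; rewrite natrD mulrDl; lra.
Qed.

End ConditioningOnXY.

Lemma ln_ge1BV (R : realType) (x : R) : 0 < x -> 1 - x^-1 <= ln x.
Proof.
move=> x_gt0; have xV_gt0 : 0 < x^-1 by rewrite invr_gt0.
have := @le_ln1Dx R (x^-1 - 1); rewrite addrCA subrr addr0 lnV ?posrE //.
by move=> /(_ ltac:(lra)); lra.
Qed.

Lemma ln1B_ge (R : realType) (t : R) : 0 <= t <= 1/5 -> - (5/4 * t) <= ln (1 - t).
Proof.
case/andP=> t_ge0 t_le; apply: le_trans (ln_ge1BV _); last by lra.
have t1_gt0 : 0 < 1 - t by lra.
have : (1 - t)^-1 <= 1 + 5/4 * t.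
  by rewrite -[X in X <= _]mulr1 ler_pdivrMl //; nra.
lra.
Qed.

Lemma ln_ge_of_expr1B_le (R : realType) k (t p : R) :
  0 <= t <= 1/5 -> (1 - t) ^+ k <= p -> - (k%:R * (5/4 * t)) <= ln p.
Proof.
move=> /andP[t_ge0 t_le] pow_le.
have pow_gt0 : 0 < (1 - t) ^+ k by rewrite exprn_gt0 // subr_gt0; lra.
apply: (@le_trans _ _ (ln ((1 - t) ^+ k))); last first.
  by rewrite ler_ln ?posrE // (lt_le_trans pow_gt0).
rewrite lnXn ?subr_gt0; last by lra.
rewrite -[ln _ *+ _]mulr_natl -mulrN; apply: ler_wpM2l; first exact: ler0n.
by apply: ln1B_ge; rewrite t_ge0.
Qed.

Lemma load_le (R : realType) (m N n : nat) : (0 < m)%N ->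
  (N%:R : R) <= 1/40 * m%:R -> (n%:R : R) <= 1/20 * m%:R ->
  ((N + N + n)%:R : R) * (2 / m%:R) <= 1/5.
Proof.
move=> m_gt0 hN hn; have m_gt0R : 0 < (m%:R : R) by rewrite ltr0n.
rewrite mulrA ler_pdivrMr // !natrD; lra.
Qed.

Lemma rate_le (R : realType) (m N n : nat) (eta : R) : (0 < m)%N -> 0 < eta ->
  - Jbar2 * ((N * n + n ^ 2)%:R / m%:R) * (1 + eta) <=
  - (n%:R * (5/4 * ((N + N + n)%:R * (2 / m%:R)))).
Proof.
move=> m_gt0 eta_gt0; rewrite /Jbar2 !natrD natrM natrX.
set A : R := N%:R; set B : R := n%:R; set r : R := m%:R^-1.
have r_gt0 : 0 < r by rewrite invr_gt0 ltr0n.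
have X_ge0 : 0 <= (A * B + B ^+ 2) * r.
  by rewrite pmulr_lge0 // addr_ge0 ?mulr_ge0 ?sqr_ge0 ?ler0n.
have B2r_ge0 : 0 <= B ^+ 2 * r by rewrite pmulr_lge0 // sqr_ge0.
have excess_ge0 := mulr_ge0 X_ge0 (ltW eta_gt0).
lra.
Qed.

Theorem lemma4 (R : realType) (N n : nat -> nat) (eps : R)
  (heps0 : 0 < eps) (heps1 : eps <= 1)
  (hNpos : forall m : nat, ~~ odd m -> (0 < N m)%N)
  (hnpos : forall m : nat, ~~ odd m -> (0 < n m)%N)
  (hNo : forall eta : R, 0 < eta -> exists M : nat, forall m : nat,
      (M <= m)%N -> ~~ odd m -> (N m)%:R <= eta * m%:R)
  (hno : forall eta : R, 0 < eta -> exists M : nat, forall m : nat,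
      (M <= m)%N -> ~~ odd m -> (n m)%:R <= eta * m%:R) :
  forall eta : R, 0 < eta -> exists M : nat, forall m : nat,
    (M <= m)%N -> ~~ odd m ->
    forall (om : {set 'I_m}), #|om| = m./2 ->
    forall x y : {ffun 'I_(N m) -> 'I_m},
    forall c : 'I_m -> R, (c = @unif R m \/ c = @qom R m eps om) ->
    0 < @Pr3 R m (N m) (n m) (@unif R m) (@qom R m eps om) c (@evXY m (N m) (n m) x y) ->
    - Jbar2 * (((N m * n m + n m ^ 2)%:R) / m%:R) * (1 + eta)
      <= ln (@Pr3 R m (N m) (n m) (@unif R m) (@qom R m eps om) c (@evXYB m (N m) (n m) x y)
             / @Pr3 R m (N m) (n m) (@unif R m) (@qom R m eps om) c (@evXY m (N m) (n m) x y)).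
Proof.
move=> eta eta_gt0.
have [M1 N_small] := hNo (1/40) ltac:(lra).
have [M2 n_small] := hno (1/20) ltac:(lra).
exists (maxn 1 (maxn M1 M2)) => m; rewrite !geq_max => /and3P[m_gt0 mM1 mM2] m_even.
move=> om om_half x y c c_marg XY_gt0.
have eps_bound : -1 <= eps <= 1 by apply/andP; split; lra.
have c_bounds : forall j, 0 <= c j <= 2 / m%:R.
  by case: c_marg => -> j; [apply: unif_bounds | apply: qom_bounds].
have c1 : \sum_j c j = 1.
  by case: c_marg => ->; [apply: sum_unif | apply: sum_qom].
have d_ge0 : 0 <= 2 / m%:R :> R by rewrite divr_ge0 ?ler0n.
have t_le := load_le m_gt0 (N_small m mM1 m_even) (n_small m mM2 m_even).
have t_ge0 : 0 <= (N m + N m + n m)%:R * (2 / m%:R) :> R by rewrite mulr_ge0 ?ler0n.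
have t_le1 : (N m + N m + n m)%:R * (2 / m%:R) <= 1 :> R by lra.
have ratio_ge := Pr3_evXYB_ratio_ge d_ge0 c_bounds c1 t_le1 XY_gt0.
apply: (le_trans (rate_le (N m) (n m) m_gt0 eta_gt0)).
by apply: ln_ge_of_expr1B_le ratio_ge; rewrite t_ge0 t_le.
Qed.
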